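(* Let $\alpha\in(0,1)$ and run GD with learning rate $\eta$ from $\mathbf{W}_0=\mathbf{0}$, where $\eta p_1\lesssim1$. Then for every $j\in[K]$ and every sufficiently large training time $t\gg\frac{\log\log K}{\eta p_j}$, $$\mathcal{L}_j^{\mathrm{GD}}(t)-\mathcal{L}_j^*\gtrsim e^{-\eta p_j t}(\log K)^2,$$ where $\mathcal{L}_j^*=-\big(1-\alpha+\tfrac{\alpha}{K}\big)\log\big(1-\alpha+\tfrac{\alpha}{K}\big)-\tfrac{\alpha(K-1)}{K}\log\tfrac{\alpha}{K}$ is the minimal sub-task loss.
   Context: Setup: $K=MC$ items in $M$ groups of $C$ items (group $i$: indices $(i-1)C+1,\dots,iC$); $\widetilde p_1>\dots>\widetilde p_M>0$, $\sum_i\widetilde p_i=1$, $p_j=\widetilde p_i/C$ for $j$ in group $i$. $\mathbf{E},\widetilde{\mathbf{E}}\in\mathbb{R}^{K\times K}$ have orthonormal columns. Noise: $p_{i\mid j}=1-\alpha+\alpha/K$ if $i=j$, $\alpha/K$ otherwise. $\widehat p_{i\mid j}(\mathbf{W})=\exp(\widetilde{\mathbf{E}}_i^\top\mathbf{W}\mathbf{E}_j)/\sum_k\exp(\widetilde{\mathbf{E}}_k^\top\mathbf{W}\mathbf{E}_j)$; $\mathcal{L}_j(\mathbf{W})=-\sum_ip_{i\mid j}\log\widehat p_{i\mid j}(\mathbf{W})$, $\mathcal{L}=\sum_jp_j\mathcal{L}_j$. GD: $\mathbf{W}_{t+1}=\mathbf{W}_t-\eta\nabla\mathcal{L}(\mathbf{W}_t)$,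 $\mathcal{L}^{\mathrm{GD}}_j(t)=\mathcal{L}_j(\mathbf{W}_t)$. Regime $K\gg1$, $M\ll C$; $\lesssim,\gtrsim$ hide constant factors and $\gg$ means ''much larger than''. *)

From mathcomp Require Import all_boot all_order all_algebra.
From mathcomp Require Import all_classical all_reals all_analysis.
Set Implicit Arguments. Unset Strict Implicit. Unset Printing Implicit Defensive.
Import Order.TTheory GRing.Theory Num.Theory.
Local Open Scope ring_scope.

Section Defs.
Variable R : realType.
Variable K : nat.

Definition orthonormal_cols (E : 'M[R]_K) : Prop := E^T *m E = 1%:M.

Definition pnoise (alpha : R) (i j : 'I_K) : R :=
  if i == j then 1 - alpha + alpha / K%:R else alpha / K%:R.

Definition logit (E Et W : 'M[R]_K) (i j : 'I_K) : R :=
  ((col i Et)^T *m W *m col j E) 0 0.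

Definition phat (E Et W : 'M[R]_K) (i j : 'I_K) : R :=
  expR (logit E Et W i j) / \sum_(k < K) expR (logit E Et W k j).

Definition Lj (alpha : R) (E Et W : 'M[R]_K) (j : 'I_K) : R :=
  - \sum_(i < K) pnoise alpha i j * ln (phat E Et W i j).

Definition Ltot (p : 'I_K -> R) (alpha : R) (E Et W : 'M[R]_K) : R :=
  \sum_(j < K) p j * Lj alpha E Et W j.

Definition grad (f : 'M[R]_K -> R) (W : 'M[R]_K) : 'M[R]_K :=
  \matrix_(a < K, b < K) derive1 (fun h : R => f (W + h *: delta_mx a b)) 0.

Definition gd_iter (f : 'M[R]_K -> R) (eta : R) (t : nat) : 'M[R]_K :=
  iter t (fun W => W - eta *: grad f W) 0.

Definition Lstar (alpha : R) : R :=
  - (1 - alpha + alpha / K%:R) * ln (1 - alpha + alpha / K%:R)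
  - alpha * (K%:R - 1) / K%:R * ln (alpha / K%:R).
End Defs.

(* group-structured frequencies: item j (0-indexed) lies in group j %/ C,
   p_j = ptilde_{group(j)} / C *)
Lemma grp_lt (M C : nat) (j : 'I_(M * C)) : (j %/ C < M)%N.
Proof.
have hj : (nat_of_ord j < M * C)%N := ltn_ord j.
move: hj; move: (nat_of_ord j) => n hj.
have hC : (0 < C)%N.
  by rewrite lt0n; apply/eqP => C0; move: hj; rewrite C0 muln0.
by rewrite ltn_divLR.
Qed.

Definition grp (M C : nat) (j : 'I_(M * C)) : 'I_M := Ordinal (grp_lt j).

Definition pgroup (R : realType) (M C : nat) (pt : 'I_M -> R) (j : 'I_(M * C)) : R :=
  pt (grp j) / C%:R.

(* Since E and Et are orthogonal, a gradient step acts on the logit matrix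
   Z = Et^T W E as Z <- Z - eta G, where column j of G is
   p_j (softmax(Z_j) - p_{.|j}).  Starting from Z = 0, column j therefore stays
   of the form B 1 + u e_j, and the margin u follows the scalar recursion
   u <- u + eta p_j (1 - alpha - gap u), gap u being the difference between the
   predicted probabilities of class j and of any other class.  The optimal
   margin u* = ln (1 + K (1 - alpha) / alpha) is at least (ln K) / 2, and as gap
   is 3/8-Lipschitz the lag u* - u_t is at least
   (1 - 3 eta p_j / 8)^t u* >= exp (- eta p_j t / 2) u*.  Finally L_j - L_j^* is
   the Kullback-Leibler divergence from the noisy labels to the prediction; it
   dominates the squared Hellinger distance, hence the square of the drop of the
   top-class probability, which is of order alpha (1 - alpha) min (u* - u_t, 1). *)

From mathcomp Require Import all_boot all_order all_algebra.
From mathcomp Require Import all_classical all_reals all_analysis.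
From mathcomp Require Import ring lra.
Import Order.TTheory GRing.Theory Num.Theory.
Import numFieldTopology.Exports numFieldNormedType.Exports.
Local Open Scope ring_scope.
Set Implicit Arguments. Unset Strict Implicit. Unset Printing Implicit Defensive.

(** * Softmax with one distinguished class *)

Section SoftmaxMargin.
Variable R : realType.
Implicit Types K u w : R.

Lemma ln_le_subr1 (x : R) : 0 < x -> ln x <= x - 1.
Proof.
by move=> x_gt0; have := @le_ln1Dx R (x - 1); rewrite addrCA subrr addr0; apply; lra.
Qed.

(* Predictions among K classes whose logits agree except for one distinguished
   class, which leads by the margin u. *)
Definition softmax_top K u : R := expR u / (expR u + (K - 1)).
Definition softmax_rest K u : R := (expR u + (K - 1))^-1.
Definition softmax_gap K u : R := 1 - K / (expR u + (K - 1)).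

Lemma softmax_den_gt0 K u : 1 <= K -> 0 < expR u + (K - 1).
Proof. by move=> K_ge1; apply: ltr_pwDl; [exact: expR_gt0 | lra]. Qed.

Lemma softmax_gapE K u : 1 <= K ->
  softmax_gap K u = softmax_top K u - softmax_rest K u.
Proof.
move=> /(softmax_den_gt0 u) /lt0r_neq0 den_neq0.
by rewrite /softmax_gap /softmax_top /softmax_rest; field.
Qed.

Lemma softmax_top_rest K u : 1 <= K ->
  softmax_top K u + (K - 1) * softmax_rest K u = 1.
Proof.
move=> /(softmax_den_gt0 u) /lt0r_neq0 den_neq0.
by rewrite /softmax_top /softmax_rest; field.
Qed.

Lemma is_derive_softmax_gap K u : 1 <= K ->
  is_derive u 1 (softmax_gap K) (K * expR u / (expR u + (K - 1)) ^+ 2).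
Proof.
move=> K_ge1.
have den_neq0 : expR u + (K - 1) != 0 by exact/lt0r_neq0/softmax_den_gt0.
have d_den : is_derive u 1 (fun v : R => expR v + (K - 1)) (expR u + 0).
  exact: is_deriveD.
have d_inv := is_deriveV (f := fun v => expR v + (K - 1)) den_neq0 d_den.
have d_gap := is_deriveB (is_derive_cst (1 : R) u 1) (is_deriveZ K d_inv).
rewrite /softmax_gap; apply: (is_derive_eq d_gap).
by rewrite /GRing.scale /=; field.
Qed.

Lemma softmax_gap_lipschitz K a b : 3 <= K -> a <= b ->
  softmax_gap K b - softmax_gap K a <= 3 / 8 * (b - a).
Proof.
move=> K_ge3 ab; have K_ge1 : 1 <= K by lra.
have gap_cont : continuous (softmax_gap K).
  move=> x; apply: differentiable_continuous; apply/derivable1_diffP.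
  by have := is_derive_softmax_gap x K_ge1; case.
have [c _ ->] := MVT_segment ab (fun x _ => is_derive_softmax_gap x K_ge1)
  (continuous_subspaceT gap_cont).
apply: ler_wpM2r; first lra.
have e_gt0 : 0 < expR c := expR_gt0 c.
rewrite ler_pdivrMr; last exact/exprn_gt0/softmax_den_gt0.
(* The derivative K e / (e + K - 1)^2 is maximal at e = K - 1, where it equals
   K / (4 (K - 1)) <= 3 / 8. *)
have : 0 <= (expR c - (K - 1)) ^+ 2 by exact: sqr_ge0.
have : 0 <= expR c * (K - 3) by apply: mulr_ge0; lra.
rewrite !expr2; nra.
Qed.

Lemma softmax_top_shift K u w : 1 <= K -> 0 <= w ->
  softmax_top K u * (1 - softmax_top K u) * (1 - expR (- w))
    <= softmax_top K u - softmax_top K (u - w).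
Proof.
move=> K_ge1 w_ge0; rewrite /softmax_top expRB -expRN.
set E := expR u; set v := expR (- w).
have E_gt0 : 0 < E := expR_gt0 u.
have v_gt0 : 0 < v := expR_gt0 (- w).
have den_gt0 : 0 < E + (K - 1) by lra.
have den'_gt0 : 0 < E * v + (K - 1) by apply: ltr_pwDl; [exact: mulr_gt0 | lra].
rewrite -subr_ge0.
have -> : E / (E + (K - 1)) - E * v / (E * v + (K - 1))
    - E / (E + (K - 1)) * (1 - E / (E + (K - 1))) * (1 - v)
  = E ^+ 2 * (K - 1) * (1 - v) ^+ 2 / ((E + (K - 1)) ^+ 2 * (E * v + (K - 1))).
  by field; rewrite !lt0r_neq0.
apply: divr_ge0; last by apply: mulr_ge0; [exact: sqr_ge0 | lra].
by apply: mulr_ge0; [apply: mulr_ge0; [exact: sqr_ge0 | lra] | exact: sqr_ge0].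
Qed.

Lemma one_sub_expN_ge w : 0 <= w -> Num.min w 1 / 2 <= 1 - expR (- w).
Proof.
move=> w_ge0.
have expw_ge : 1 + w <= expR w := expR_ge1Dx w.
have expNw : expR (- w) * expR w = 1 by rewrite expRN mulVf // gt_eqF // expR_gt0.
have expNw_gt0 : 0 < expR (- w) := expR_gt0 (- w).
have frac_le : w / (1 + w) <= 1 - expR (- w).
  rewrite ler_pdivrMr; last lra.
  nra.
apply: le_trans frac_le; rewrite ler_pdivlMr; last lra.
by case: (leP w 1) => [w_le1 | w_gt1]; nra.
Qed.

Lemma sqr_gap_le_kl (N q s b r : R) :
  0 <= N -> 0 < q -> 0 < s -> 0 < b -> 0 < r ->
  q + N * b = 1 -> s + N * r = 1 ->
  (q - s) ^+ 2 / 4 <= q * (ln q - ln s) + N * b * (ln b - ln r).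
Proof.
move=> N_ge0 q_gt0 s_gt0 b_gt0 r_gt0 qb1 sr1.
set a := Num.sqrt q; set c := Num.sqrt s.
have a_gt0 : 0 < a by rewrite sqrtr_gt0.
have c_gt0 : 0 < c by rewrite sqrtr_gt0.
have qE : q = a ^+ 2 by rewrite sqr_sqrtr // ltW.
have sE : s = c ^+ 2 by rewrite sqr_sqrtr // ltW.
have rest_le : N * b * (1 - r / b) <= N * b * (ln b - ln r).
  apply: ler_wpM2l; first exact: mulr_ge0 (ltW _).
  by have := ln_le_subr1 (divr_gt0 r_gt0 b_gt0); rewrite ln_div ?posrE //; lra.
have top_le : q * (2 * (1 - c / a)) <= q * (ln q - ln s).
  apply: ler_wpM2l; first exact: ltW.
  have := ln_le_subr1 (divr_gt0 c_gt0 a_gt0).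
  by rewrite ln_div ?posrE // qE sE !lnXn //; lra.
(* the two bounds add up to the squared Hellinger distance [(a - c)^2] *)
have hellinger : (a - c) ^+ 2 <= q * (ln q - ln s) + N * b * (ln b - ln r).
  have -> : (a - c) ^+ 2 = q * (2 * (1 - c / a)) + N * b * (1 - r / b).
    have -> : N * b * (1 - r / b) = N * b - N * r by field; rewrite gt_eqF.
    have -> : N * b - N * r = s - q by lra.
    by rewrite qE sE; field; rewrite gt_eqF.
  exact: lerD.
apply: le_trans hellinger.
have a_le1 : a <= 1 by rewrite -sqrtr1 ler_sqrt //; nra.
have c_le1 : c <= 1 by rewrite -sqrtr1 ler_sqrt //; nra.
rewrite qE sE -subr_ge0.
have -> : (a - c) ^+ 2 - (a ^+ 2 - c ^+ 2) ^+ 2 / 4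
  = (a - c) ^+ 2 * (4 - (a + c) ^+ 2) / 4 by field.
apply: divr_ge0; last lra.
by apply: mulr_ge0; [exact: sqr_ge0 | rewrite expr2; nra].
Qed.

Lemma expRN_le_sqr_contraction (y : R) : 0 <= y -> y <= 1 / 4 ->
  expR (- y) <= (1 - 3 / 8 * y) ^+ 2.
Proof.
move=> y_ge0 y_le.
have expy_ge : 1 + y <= expR y := expR_ge1Dx y.
have expNy : expR (- y) * expR y = 1 by rewrite expRN mulVf // gt_eqF // expR_gt0.
have expNy_gt0 : 0 < expR (- y) := expR_gt0 (- y).
have : 1 <= (1 - 3 / 8 * y) ^+ 2 * (1 + y) by rewrite expr2; nra.
rewrite expr2; nra.
Qed.

(** * The margin recursion under label noise *)

Definition gd_margin (al K y : R) (n : nat) : R :=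
  iter n (fun u => u + y * (1 - al - softmax_gap K u)) 0.

Definition label_kl (al K u : R) : R :=
  (1 - al + al / K) * (ln (1 - al + al / K) - ln (softmax_top K u))
  + (K - 1) * (al / K) * (ln (al / K) - ln (softmax_rest K u)).

Definition margin_star (al K : R) : R := ln (1 + K * (1 - al) / al).

Section NoisyLabelMargin.
Variables (al K : R).

Let expR_margin_star : 0 < al -> al < 1 -> 0 < K ->
  expR (margin_star al K) = 1 + K * (1 - al) / al.
Proof.
move=> al_gt0 al_lt1 K_gt0.
rewrite lnK // posrE; apply: ltr_pwDr; last exact: ler01.
by apply: divr_gt0 => //; apply: mulr_gt0; lra.
Qed.

Lemma softmax_top_margin_star : 0 < al -> al < 1 -> 0 < K ->
  softmax_top K (margin_star al K) = 1 - al + al / K.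
Proof.
move=> al_gt0 al_lt1 K_gt0.
by rewrite /softmax_top expR_margin_star //; field; rewrite !gt_eqF //=; lra.
Qed.

Lemma softmax_rest_margin_star : 0 < al -> al < 1 -> 0 < K ->
  softmax_rest K (margin_star al K) = al / K.
Proof.
move=> al_gt0 al_lt1 K_gt0.
by rewrite /softmax_rest expR_margin_star //; field; rewrite !gt_eqF //=; lra.
Qed.

Lemma softmax_gap_margin_star : 0 < al -> al < 1 -> 1 <= K ->
  softmax_gap K (margin_star al K) = 1 - al.
Proof.
move=> al_gt0 al_lt1 K_ge1; have K_gt0 : 0 < K by lra.
rewrite softmax_gapE // softmax_top_margin_star // softmax_rest_margin_star //.
lra.
Qed.

Lemma margin_star_ge : 0 < al -> al < 1 -> 1 <= K * (1 - al) ^+ 2 ->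
  ln K / 2 <= margin_star al K.
Proof.
move=> al_gt0 al_lt1 K_large.
have sqr_gt0 : 0 < (1 - al) ^+ 2 by apply: exprn_gt0; lra.
have K_gt0 : 0 < K by nra.
set e := 1 + K * (1 - al) / al.
have e_ge : K * (1 - al) <= e.
  have : K * (1 - al) <= K * (1 - al) / al by rewrite ler_pdivlMr //; nra.
  rewrite /e; lra.
have K_le : K <= e ^+ 2.
  apply: (le_trans (y := (K * (1 - al)) ^+ 2)); last by rewrite lerXn2r // nnegrE; nra.
  by rewrite exprMn expr2 -mulrA ler_peMr // ltW.
have : ln K <= ln (e ^+ 2) by rewrite ler_ln // posrE exprn_gt0 //; nra.
by rewrite lnXn; [rewrite /margin_star -/e; lra | nra].
Qed.

Lemma margin_star_ge0 : 0 < al -> al < 1 -> 0 < K -> 0 <= margin_star al K.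
Proof.
move=> al_gt0 al_lt1 K_gt0; apply: ln_ge0; rewrite lerDl.
by apply: divr_ge0 (ltW _) => //; apply: mulr_ge0; lra.
Qed.

Lemma gd_margin_lag (y : R) (n : nat) : 0 < al -> al < 1 -> 3 <= K ->
  0 <= y -> y <= 8 / 3 ->
  (1 - 3 / 8 * y) ^+ n * margin_star al K <= margin_star al K - gd_margin al K y n.
Proof.
move=> al_gt0 al_lt1 K_ge3 y_ge0 y_le.
have us_ge0 : 0 <= margin_star al K by apply: margin_star_ge0 => //; lra.
have gap_us : softmax_gap K (margin_star al K) = 1 - al.
  by apply: softmax_gap_margin_star => //; lra.
set us := margin_star al K in us_ge0 gap_us *.
elim: n => [|n IHn]; first by rewrite expr0 mul1r subr0.
rewrite /gd_margin iterS -/(gd_margin al K y n) exprS -mulrA.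
set U := gd_margin al K y n in IHn *.
have pow_ge0 : 0 <= (1 - 3 / 8 * y) ^+ n * us.
  by apply: mulr_ge0 => //; apply: exprn_ge0; lra.
have U_le : U <= us by lra.
have := softmax_gap_lipschitz K_ge3 U_le; rewrite gap_us => lip.
have : y * (1 - al - softmax_gap K U) <= y * (3 / 8 * (us - U)).
  by apply: ler_wpM2l => //; lra.
have : (1 - 3 / 8 * y) * ((1 - 3 / 8 * y) ^+ n * us) <= (1 - 3 / 8 * y) * (us - U).
  by apply: ler_wpM2l => //; lra.
lra.
Qed.

Lemma label_kl_lag (w : R) : 0 < al -> al < 1 -> 2 <= K -> 0 <= w ->
  ((1 - al) * (al / 2) * (1 - expR (- w))) ^+ 2 / 4
    <= label_kl al K (margin_star al K - w).
Proof.
move=> al_gt0 al_lt1 K_ge2 w_ge0.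
have K_gt0 : 0 < K by lra.
have K_ge1 : 1 <= K by lra.
have top_us := softmax_top_margin_star al_gt0 al_lt1 K_gt0.
have rest_us := softmax_rest_margin_star al_gt0 al_lt1 K_gt0.
set us := margin_star al K in top_us rest_us *.
set q := 1 - al + al / K in top_us *.
set s := softmax_top K (us - w); set r := softmax_rest K (us - w).
have den_gt0 := softmax_den_gt0 (us - w) K_ge1.
have b_gt0 : 0 < al / K := divr_gt0 al_gt0 K_gt0.
have b_le : al / K <= al / 2 by rewrite ler_pdivrMr // mulrAC ler_pdivlMr //; nra.
have q_ge : 1 - al <= q by rewrite /q; lra.
have s_gt0 : 0 < s := divr_gt0 (expR_gt0 _) den_gt0.
have r_gt0 : 0 < r by rewrite invr_gt0.
have qb1 : q + (K - 1) * (al / K) = 1 by rewrite -top_us -rest_us softmax_top_rest.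
have sr1 : s + (K - 1) * r = 1 := softmax_top_rest _ K_ge1.
have N_ge0 : 0 <= K - 1 by lra.
have q_gt0 : 0 < q by lra.
have kl := sqr_gap_le_kl N_ge0 q_gt0 s_gt0 b_gt0 r_gt0 qb1 sr1.
have shift := softmax_top_shift us K_ge1 w_ge0; rewrite top_us -/s in shift.
have m_ge0 : 0 <= 1 - expR (- w) by rewrite subr_ge0 expR_le1; lra.
have var_ge : (1 - al) * (al / 2) <= q * (1 - q) by apply: ler_pM; rewrite /q; lra.
have gap_ge : (1 - al) * (al / 2) * (1 - expR (- w)) <= q - s.
  by apply: le_trans shift; apply: ler_wpM2r.
apply: le_trans kl; apply: ler_wpM2r => //; rewrite lerXn2r // nnegrE.
  by apply: mulr_ge0 => //; apply: mulr_ge0; lra.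
by apply: le_trans gap_ge; apply: mulr_ge0 => //; apply: mulr_ge0; lra.
Qed.

Lemma gd_margin_le_star (y : R) (n : nat) : 0 < al -> al < 1 -> 3 <= K ->
  0 <= y -> y <= 8 / 3 -> gd_margin al K y n <= margin_star al K.
Proof.
move=> al_gt0 al_lt1 K_ge3 y_ge0 y_le.
have := gd_margin_lag n al_gt0 al_lt1 K_ge3 y_ge0 y_le.
have : 0 <= (1 - 3 / 8 * y) ^+ n * margin_star al K.
  by apply: mulr_ge0; [apply: exprn_ge0 | apply: margin_star_ge0]; lra.
lra.
Qed.

Lemma gd_margin_lag_sqr (y : R) (t : nat) :
  0 < al -> al < 1 -> 3 <= K -> 1 <= K * (1 - al) ^+ 2 -> 0 <= y -> y <= 1 / 4 ->
  expR (- (y * t%:R)) * ln K ^+ 2 / 4 <= (margin_star al K - gd_margin al K y t) ^+ 2.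
Proof.
move=> al_gt0 al_lt1 K_ge3 K_large y_ge0 y_le.
have lnK_gt0 : 0 < ln K by apply: ln_gt0; lra.
have us_ge := margin_star_ge al_gt0 al_lt1 K_large.
have y_le' : y <= 8 / 3 by lra.
have lag := gd_margin_lag t al_gt0 al_lt1 K_ge3 y_ge0 y_le'.
set us := margin_star al K in us_ge lag *.
set rho := 1 - 3 / 8 * y in lag.
have rho_pow_ge0 : 0 <= rho ^+ t by apply: exprn_ge0; rewrite /rho; lra.
have lag_ge0 : 0 <= rho ^+ t * us by apply: mulr_ge0 => //; lra.
have decay : expR (- (y * t%:R)) <= (rho ^+ t) ^+ 2.
  rewrite -exprM mulnC exprM -mulNr mulrC expRM_natl.
  by rewrite lerXn2r ?nnegrE ?expR_ge0 ?sqr_ge0 // expRN_le_sqr_contraction.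
apply: (le_trans (y := (rho ^+ t * us) ^+ 2)); last first.
  by rewrite lerXn2r ?nnegrE //; apply: le_trans lag.
have -> : expR (- (y * t%:R)) * ln K ^+ 2 / 4 = expR (- (y * t%:R)) * (ln K / 2) ^+ 2.
  by field.
rewrite [X in _ <= X]exprMn; apply: ler_pM; rewrite ?expR_ge0 ?sqr_ge0 //.
by rewrite lerXn2r ?nnegrE //; lra.
Qed.

Lemma label_kl_gd_margin_ge (y : R) (t : nat) :
  0 < al -> al < 1 -> 3 <= K -> 1 <= K * (1 - al) ^+ 2 ->
  0 <= y -> y <= 1 / 4 -> 2 * ln (ln K) <= y * t%:R ->
  (1 - al) ^+ 2 * al ^+ 2 / 256 * expR (- (y * t%:R)) * ln K ^+ 2
    <= label_kl al K (gd_margin al K y t).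
Proof.
move=> al_gt0 al_lt1 K_ge3 K_large y_ge0 y_le time_large.
have lnK_gt0 : 0 < ln K by apply: ln_gt0; lra.
have w_sqr := gd_margin_lag_sqr t al_gt0 al_lt1 K_ge3 K_large y_ge0 y_le.
rewrite -(subKr (margin_star al K) (gd_margin al K y t)).
set w := margin_star al K - gd_margin al K y t in w_sqr *.
set X := expR (- (y * t%:R)) * ln K ^+ 2 in w_sqr *.
have X_le1 : X <= 1.
  have : ln K ^+ 2 <= expR (y * t%:R).
    by rewrite -[ln K]lnK ?posrE // -expRM_natl ler_expR.
  by move=> lnK_le; rewrite /X expRN mulrC ler_pdivrMr ?expR_gt0 // mul1r.
have w_ge0 : 0 <= w.
  by rewrite subr_ge0; apply: gd_margin_le_star => //; lra.
have m_sqr : X / 16 <= (1 - expR (- w)) ^+ 2.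
  apply: (le_trans (y := (Num.min w 1 / 2) ^+ 2)); last first.
    rewrite lerXn2r ?nnegrE ?one_sub_expN_ge //; last by rewrite subr_ge0 expR_le1; lra.
    by apply: divr_ge0 => //; rewrite le_min w_ge0 ler01.
  by case: (leP w 1) => [w_le1 | w_gt1]; nra.
have K_ge2 : 2 <= K by lra.
apply: le_trans (label_kl_lag al_gt0 al_lt1 K_ge2 w_ge0).
have -> : (1 - al) ^+ 2 * al ^+ 2 / 256 * expR (- (y * t%:R)) * ln K ^+ 2
  = ((1 - al) * (al / 2)) ^+ 2 / 4 * (X / 16) by rewrite /X; field.
rewrite [X in _ <= X](_ : _ = ((1 - al) * (al / 2)) ^+ 2 / 4 * (1 - expR (- w)) ^+ 2).
  by apply: ler_wpM2l => //; apply: divr_ge0; rewrite ?sqr_ge0.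
by rewrite exprMn; field.
Qed.

End NoisyLabelMargin.
End SoftmaxMargin.

(** * Gradient descent on the logits *)

Section LogSumExp.
Variable R : realType.

Lemma sumr_expR_gt0 n (z : 'I_n -> R) : (0 < n)%N -> 0 < \sum_(k < n) expR (z k).
Proof.
case: n z => // n z _; rewrite big_ord_recl; apply: ltr_pwDl; first exact: expR_gt0.
by apply: sumr_ge0 => k _; exact: expR_ge0.
Qed.

Lemma is_derive_affine (a b x : R) : is_derive x 1 (fun h : R => a + h * b) b.
Proof.
have -> : (fun h : R => a + h * b) = cst a + b \*: id.
  by apply/funext => h /=; rewrite mulrC.
have := is_deriveD (is_derive_cst a x 1) (is_deriveZ b (is_derive_id x 1)).
by rewrite add0r /GRing.scale /= mulr1.
Qed.

Lemma is_derive_sumr n (f : 'I_n -> R -> R) (df : 'I_n -> R) (x : R) :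
  (forall i, is_derive x 1 (f i) (df i)) ->
  is_derive x 1 (fun h => \sum_(i < n) f i h) (\sum_(i < n) df i).
Proof. by move=> d_f; rewrite -fct_sumE; exact: is_derive_sum. Qed.

Lemma is_derive_logsumexp_affine n (z c w : 'I_n -> R) : (0 < n)%N ->
  is_derive (0 : R) 1
    (fun h => ln (\sum_k expR (z k + h * c k)) - \sum_i w i * (z i + h * c i))
    (\sum_i (expR (z i) / \sum_k expR (z k) - w i) * c i).
Proof.
move=> n_gt0.
have d_exp k : is_derive (0 : R) 1 (fun h => expR (z k + h * c k)) (expR (z k) * c k).
  have := is_derive1_comp (is_derive_expR _) (is_derive_affine (z k) (c k) 0).
  by rewrite mul0r addr0.
have S_gt0 := sumr_expR_gt0 (fun k => z k + 0 * c k) n_gt0.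
have d_ln := is_derive1_comp (is_derive1_ln S_gt0) (is_derive_sumr d_exp).
have d_lin : is_derive (0 : R) 1
    (fun h => \sum_i w i * (z i + h * c i)) (\sum_i w i * c i).
  by apply: is_derive_sumr => i; apply: is_deriveZ; exact: is_derive_affine.
apply: is_derive_eq (is_deriveB d_ln d_lin) _.
under eq_bigr do rewrite mul0r addr0.
by rewrite mulr_sumr -sumrB; apply: eq_bigr => i _; ring.
Qed.

End LogSumExp.

Section DeltaMx.
Variable R : pzRingType.

Lemma mulmx_delta_mxE m n p q (A : 'M[R]_(m, n)) (B : 'M[R]_(p, q)) a b i j :
  (A *m delta_mx a b *m B) i j = A i a * B b j.
Proof.
rewrite -(mul_delta_mx (0 : 'I_1)) mulmxA -colE -mulmxA -rowE mxE big_ord1.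
by rewrite !mxE.
Qed.

End DeltaMx.

Section GradientDescent.
Variables (R : realType) (K : nat).
Implicit Types (E Et W : 'M[R]_K) (alpha : R).

Let K_gt0 (j : 'I_K) : (0 < K)%N := leq_ltn_trans (leq0n j) (ltn_ord j).

Lemma sum_diag_const (j : 'I_K) (x y : R) :
  \sum_(i < K) (if i == j then x else y) = x + (K%:R - 1) * y.
Proof.
have K_pos := K_gt0 j.
rewrite (bigD1 j) //= eqxx (eq_bigr (fun _ => y)) => [|i /negbTE -> //].
by rewrite sumr_const cardC1 card_ord -subn1 -[y *+ _]mulr_natl natrB.
Qed.

Lemma sum_pnoise alpha (j : 'I_K) : \sum_i pnoise alpha i j = 1.
Proof.
rewrite (eq_bigr (fun i =>
  if i == j then 1 - alpha + alpha / K%:R else alpha / K%:R)) //.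
by rewrite sum_diag_const; field; rewrite pnatr_eq0 -lt0n K_gt0.
Qed.

Lemma logitE E Et W i j : logit E Et W i j = (Et^T *m W *m E) i j.
Proof.
rewrite /logit !mxE; apply: eq_bigr => l _; rewrite !mxE; congr (_ * _).
by apply: eq_bigr => k _; rewrite !mxE.
Qed.

Lemma logit_shift E Et W a b (h : R) i j :
  logit E Et (W + h *: delta_mx a b) i j = logit E Et W i j + h * (Et a i * E b j).
Proof.
rewrite !logitE mulmxDr mulmxDl mxE; congr (_ + _).
by rewrite -scalemxAr -scalemxAl mxE mulmx_delta_mxE mxE.
Qed.

Lemma Lj_logsumexp alpha E Et W j :
  Lj alpha E Et W j
  = ln (\sum_k expR (logit E Et W k j)) - \sum_i pnoise alpha i j * logit E Et W i j.
Proof.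
have S_gt0 := sumr_expR_gt0 (fun k => logit E Et W k j) (K_gt0 j).
rewrite /Lj /phat.
under eq_bigr do rewrite ln_div ?posrE ?expR_gt0 // expRK mulrBr.
by rewrite sumrB -mulr_suml sum_pnoise mul1r opprB.
Qed.

Definition grad_logits p alpha E Et W : 'M[R]_K :=
  \matrix_(i, j) (p j * (phat E Et W i j - pnoise alpha i j)).

Lemma grad_Ltot p alpha E Et W :
  grad (Ltot p alpha E Et) W = Et *m grad_logits p alpha E Et W *m E^T.
Proof.
apply/matrixP => a b; rewrite /grad mxE derive1E.
set z := logit E Et W; set c := fun i j => Et a i * E b j.
have -> : (fun h => Ltot p alpha E Et (W + h *: delta_mx a b))
  = (fun h => \sum_j p j * (ln (\sum_k expR (z k j + h * c k j))
                            - \sum_i pnoise alpha i j * (z i j + h * c i j))).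
  apply/funext => h; apply: eq_bigr => j _; rewrite Lj_logsumexp.
  by congr (_ * (ln _ - _)); apply: eq_bigr => k _; rewrite logit_shift.
have D := is_derive_sumr (fun j => is_deriveZ (p j) (is_derive_logsumexp_affine
  (fun k => z k j) (fun k => c k j) (fun i => pnoise alpha i j) (K_gt0 j))).
rewrite (@derive_val _ _ _ _ _ _ _ D).
rewrite !mxE; apply: eq_bigr => j _; rewrite !mxE mulr_suml scaler_sumr.
apply: eq_bigr => i _; rewrite !mxE /c /phat -/z /GRing.scale /=; ring.
Qed.

Lemma logit_gd_step p alpha E Et W (eta : R) i j :
  orthonormal_cols E -> orthonormal_cols Et ->
  logit E Et (W - eta *: grad (Ltot p alpha E Et) W) i j
  = logit E Et W i j - eta * grad_logits p alpha E Et W i j.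
Proof.
move=> E_orth Et_orth; rewrite !logitE grad_Ltot mulmxBr mulmxBl.
rewrite -scalemxAr -scalemxAl !mulmxA Et_orth mul1mx -[_ *m E^T *m E]mulmxA E_orth.
by rewrite mulmx1 !mxE.
Qed.

Lemma phat_margin E Et W (j : 'I_K) (B u : R) :
  (forall i, logit E Et W i j = B + (i == j)%:R * u) ->
  forall i, phat E Et W i j
    = if i == j then softmax_top K%:R u else softmax_rest K%:R u.
Proof.
move=> logit_j i.
have expE k : expR (logit E Et W k j) = expR B * (if k == j then expR u else 1).
  by rewrite logit_j expRD; case: (k == j); rewrite ?mul1r ?mul0r ?expR0.
rewrite /phat expE (eq_bigr _ (fun k _ => expE k)) -mulr_sumr sum_diag_const mulr1.
rewrite /softmax_top /softmax_rest.
have K_ge1 : 1 <= K%:R :> R by rewrite ler1n K_gt0.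
have den_neq0 := lt0r_neq0 (softmax_den_gt0 u K_ge1).
have expB_neq0 : expR B != 0 := lt0r_neq0 (expR_gt0 B).
by case: (i == j); field; rewrite den_neq0 expB_neq0.
Qed.

Lemma logit_gd_iter p alpha E Et (eta : R) (j : 'I_K) n :
  orthonormal_cols E -> orthonormal_cols Et ->
  exists B, forall i, logit E Et (gd_iter (Ltot p alpha E Et) eta n) i j
                      = B + (i == j)%:R * gd_margin alpha K%:R (eta * p j) n.
Proof.
move=> E_orth Et_orth; elim: n => [|n [B logit_j]].
  by exists 0 => i; rewrite logitE mulmx0 mul0mx mxE mulr0 addr0.
have K_ge1 : 1 <= K%:R :> R by rewrite ler1n K_gt0.
set u := gd_margin alpha K%:R (eta * p j) n in logit_j.
exists (B - eta * (p j * (softmax_rest K%:R u - alpha / K%:R))) => i.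
rewrite /gd_iter iterS -/(gd_iter _ _ n) logit_gd_step // logit_j mxE.
rewrite (phat_margin logit_j) /pnoise /gd_margin iterS -/(gd_margin _ _ _ n) -/u.
by rewrite softmax_gapE //; case: (i == j) => /=; ring.
Qed.

Lemma Lj_sub_Lstar alpha E Et W (j : 'I_K) (B u : R) :
  (forall i, logit E Et W i j = B + (i == j)%:R * u) ->
  Lj alpha E Et W j - Lstar K alpha = label_kl alpha K%:R u.
Proof.
move=> logit_j; rewrite /Lj (eq_bigr (fun i => if i == j
    then (1 - alpha + alpha / K%:R) * ln (softmax_top K%:R u)
    else alpha / K%:R * ln (softmax_rest K%:R u))); last first.
  by move=> i _; rewrite (phat_margin logit_j) /pnoise; case: (i == j).
by rewrite sum_diag_const /Lstar /label_kl; ring.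
Qed.

End GradientDescent.

Lemma pgroup_le_top (R : realType) (M C : nat) (pt : 'I_M -> R) (j : 'I_(M * C))
    (i0 : 'I_M) :
  nat_of_ord i0 = 0%N -> (forall i1 i2 : 'I_M, (i1 < i2)%N -> pt i2 < pt i1) ->
  pgroup pt j <= pt i0 / C%:R.
Proof.
move=> i0_eq0 pt_decr; rewrite /pgroup ler_wpM2r ?invr_ge0 //.
have [->|ne] := eqVneq (grp j) i0; first by [].
apply/ltW/pt_decr; rewrite i0_eq0 lt0n; apply: contraNneq ne => grp_eq0.
by apply/eqP/ord_inj; rewrite grp_eq0 i0_eq0.
Qed.

Lemma pgroup_gt0 (R : realType) (M C : nat) (pt : 'I_M -> R) (j : 'I_(M * C)) :
  (forall i : 'I_M, 0 < pt i) -> 0 < pgroup pt j.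
Proof.
move=> pt_gt0; apply: divr_gt0 => //; rewrite ltr0n.
by have := leq_ltn_trans (leq0n _) (ltn_ord j); rewrite muln_gt0 => /andP [].
Qed.

Theorem theorem5p5 (R : realType) (alpha : R) (halpha : 0 < alpha < 1) :
  exists (A K0 c_eta c_t c : R),
    0 < A /\ 0 < K0 /\ 0 < c_eta /\ 0 < c_t /\ 0 < c /\
    forall (M C : nat) (pt : 'I_M -> R) (E Et : 'M[R]_(M * C)) (eta : R)
           (j : 'I_(M * C)) (t : nat),
      K0 <= (M * C)%:R ->
      A * M%:R <= C%:R ->
      (forall i1 i2 : 'I_M, (i1 < i2)%N -> pt i2 < pt i1) ->
      (forall i : 'I_M, 0 < pt i) ->
      \sum_(i < M) pt i = 1 ->
      orthonormal_cols E -> orthonormal_cols Et ->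
      0 < eta ->
      (forall i : 'I_M, nat_of_ord i = 0%N -> eta * (pt i / C%:R) <= c_eta) ->
      c_t * ln (ln (M * C)%:R) / (eta * pgroup pt j) <= t%:R ->
      Lj alpha E Et
         (gd_iter (Ltot (pgroup pt) alpha E Et) eta t) j
        - Lstar (M * C) alpha
      >= c * expR (- (eta * pgroup pt j * t%:R)) * (ln (M * C)%:R) ^+ 2.
Proof.
have [al_gt0 al_lt1] := andP halpha.
have inv_ge0 : 0 <= 1 / (1 - alpha) ^+ 2 by apply: divr_ge0; rewrite ?sqr_ge0.
exists 1, (3 + 1 / (1 - alpha) ^+ 2), (1 / 4), 2, ((1 - alpha) ^+ 2 * alpha ^+ 2 / 256).
do 4!(split; first lra); split.
  by apply: divr_gt0 => //; apply: mulr_gt0; apply: exprn_gt0; lra.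
move=> M C pt E Et eta j t K_large _ pt_decr pt_gt0 _ E_orth Et_orth eta_gt0
  eta_small time_large.
have y_gt0 : 0 < eta * pgroup pt j := mulr_gt0 eta_gt0 (pgroup_gt0 j pt_gt0).
have M_gt0 : (0 < M)%N := leq_ltn_trans (leq0n _) (ltn_ord (grp j)).
have y_le : eta * pgroup pt j <= 1 / 4.
  apply: le_trans (eta_small (Ordinal M_gt0) erefl).
  by apply: ler_wpM2l; [exact: ltW | exact: pgroup_le_top].
have [B logit_j] := logit_gd_iter (pgroup pt) alpha eta j t E_orth Et_orth.
rewrite (Lj_sub_Lstar alpha logit_j); apply: label_kl_gd_margin_ge => //; try lra.
- by rewrite -ler_pdivrMr ?exprn_gt0 ?subr_gt0 //; lra.
- by rewrite [_ * t%:R]mulrC -ler_pdivrMr.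
Qed.
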